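(* Let $s$ be a Lucasian GNS on a ring $D$ and let $\mathcal F$ be a set of positive integers stable under taking divisors. Suppose that for all positive integers $a,b$ with $\ell=\operatorname{lcm}(a,b)\in\mathcal F$ one has $s(\ell)\equiv \frac{s(a)s(b)}{s(g)}\bmod s(a)s(b)$, where $g=\gcd(a,b)$. Then $s$ is $\mathcal F$-Green.
   Context: A GNS over $D$ is $s\colon\mathbf N\to D$ with $s(0)=0$, $s(n)$ a non-zero-divisor for $n>0$, and $s(n-k)\mid s(n)-s(k)$ for $n>k>0$. It is Lucasian if $s(a+b)\equiv s(a)+s(b)\bmod s(a)s(b)$. It is $\mathcal F$-Green if for all $m\in\mathcal F$ and all $a,b\mid m$, with $g=\gcd(a,b)$, $\ell=\operatorname{lcm}(a,b)$, one has $s(m)\equiv\frac m\ell\frac{s(a)s(b)}{s(g)}\bmod s(a)s(b)$ (the quotient $s(a)s(b)/s(g)$ being an element of $D$). *)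

From HB Require Import structures.
From mathcomp Require Import all_boot all_order all_algebra.
Set Implicit Arguments. Unset Strict Implicit. Unset Printing Implicit Defensive.
Import GRing.Theory.
Local Open Scope ring_scope.

Definition dvdr (D : comRingType) (x y : D) : Prop := exists c : D, y = x * c.

Definition congr_mod (D : comRingType) (x y z : D) : Prop := dvdr z (x - y).

Definition non_zero_divisor (D : comRingType) (x : D) : Prop :=
  forall y : D, x * y = 0 -> y = 0.

Definition GNS (D : comRingType) (s : nat -> D) : Prop :=
  [/\ s 0%N = 0,
      (forall n : nat, (0 < n)%N -> non_zero_divisor (s n)) &
      (forall n k : nat, (0 < k)%N -> (k < n)%N -> dvdr (s (n - k)%N) (s n - s k))].

Definition Lucasian (D : comRingType) (s : nat -> D) : Prop :=
  forall a b : nat, congr_mod (s (a + b)%N) (s a + s b) (s a * s b).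

(* q is the quotient s(a)s(b)/s(gcd(a,b)) (unique, as s(gcd) is a non-zero-divisor) *)
Definition is_quot (D : comRingType) (s : nat -> D) (a b : nat) (q : D) : Prop :=
  s (gcdn a b) * q = s a * s b.

Definition Green (D : comRingType) (s : nat -> D) (F : nat -> Prop) : Prop :=
  forall m : nat, F m -> forall a b : nat, (a %| m)%N -> (b %| m)%N ->
    forall q : D, is_quot s a b q ->
      congr_mod (s m) ((m %/ lcmn a b)%:R * q) (s a * s b).

From HB Require Import structures.
From mathcomp Require Import all_boot all_order all_algebra.
From mathcomp Require Import ring.
Import GRing.Theory.
Local Open Scope ring_scope.

(* For a Lucasian sequence with s(0) = 0, induction on k shows s(d) | s(kd) and
   s(kd) = k s(d) mod s(d)^2.  Taking d = l = lcm(a, b) and m = k l, both s(a)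
   and s(b) divide s(l), so s(m) = k s(l) mod s(a) s(b); the hypothesis
   s(l) = s(a) s(b) / s(gcd(a, b)) mod s(a) s(b) then gives the Green
   congruence. *)

Section RingDivisibility.
Context {D : comRingType}.
Implicit Types x y z u v w : D.

Lemma dvdrr x : dvdr x x.
Proof. by exists 1; rewrite mulr1. Qed.

Lemma dvdr0 x : dvdr x 0.
Proof. by exists 0; rewrite mulr0. Qed.

Lemma dvdr_trans x y z : dvdr x y -> dvdr y z -> dvdr x z.
Proof. by move=> [c ->] [d ->]; exists (c * d); rewrite mulrA. Qed.

Lemma dvdrD x y z : dvdr x y -> dvdr x z -> dvdr x (y + z).
Proof. by move=> [c ->] [d ->]; exists (c + d); rewrite mulrDr. Qed.

Lemma dvdr_mulr x y z : dvdr x y -> dvdr x (y * z).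
Proof. by move=> [c ->]; exists (c * z); rewrite mulrA. Qed.

Lemma dvdr_mull x y z : dvdr x y -> dvdr x (z * y).
Proof. by rewrite mulrC; apply: dvdr_mulr. Qed.

Lemma dvdr_mul x y u v : dvdr x y -> dvdr u v -> dvdr (x * u) (y * v).
Proof. by move=> [c ->] [d ->]; exists (c * d); ring. Qed.

Lemma congr_mod_trans x y z w :
  congr_mod x y w -> congr_mod y z w -> congr_mod x z w.
Proof.
rewrite /congr_mod => xy yz.
have -> : x - z = (x - y) + (y - z) by ring.
exact: dvdrD.
Qed.

Lemma congr_modMl u x y w : congr_mod x y w -> congr_mod (u * x) (u * y) w.
Proof. by rewrite /congr_mod -mulrBr; apply: dvdr_mull. Qed.

End RingDivisibility.

Section LucasianMultiples.
Context {D : comRingType} {s : nat -> D}.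
Hypotheses (s0 : s 0%N = 0) (sLuc : Lucasian s).

Lemma LucasianD a b : exists c, s (a + b)%N = s a + s b + s a * s b * c.
Proof. by have [c Hc] := sLuc a b; exists c; rewrite -Hc; ring. Qed.

Lemma Lucasian_dvdr_mul d k : dvdr (s d) (s (k * d)%N).
Proof.
elim: k => [|k IHk]; first by rewrite mul0n s0; apply: dvdr0.
rewrite mulSn addnC; have [c ->] := LucasianD (k * d) d.
by apply: dvdrD; [apply: dvdrD => //; apply: dvdrr | apply/dvdr_mulr/dvdr_mulr].
Qed.

Lemma Lucasian_dvdn d n : (d %| n)%N -> dvdr (s d) (s n).
Proof. by move=> /dvdnP [k ->]; apply: Lucasian_dvdr_mul. Qed.

Lemma Lucasian_mul_congr d k :
  congr_mod (s (k * d)%N) (k%:R * s d) (s d * s d).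
Proof.
elim: k => [|k IHk]; first by rewrite /congr_mod mul0n s0 mul0r subr0; apply: dvdr0.
rewrite /congr_mod mulSn addnC; have [c ->] := LucasianD (k * d) d.
have -> : s (k * d)%N + s d + s (k * d)%N * s d * c - k.+1%:R * s d
    = (s (k * d)%N - k%:R * s d) + s (k * d)%N * s d * c.
  by rewrite mulrSr; ring.
apply: dvdrD => //; apply/dvdr_mulr/dvdr_mul; [apply: Lucasian_dvdr_mul | apply: dvdrr].
Qed.

Lemma Lucasian_mul_congr_dvdn a b d k : (a %| d)%N -> (b %| d)%N ->
  congr_mod (s (k * d)%N) (k%:R * s d) (s a * s b).
Proof.
rewrite /congr_mod => ad bd; apply: dvdr_trans (Lucasian_mul_congr d k).
by apply: dvdr_mul; apply: Lucasian_dvdn.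
Qed.

End LucasianMultiples.

Theorem corollary5p12 (D : comRingType) (s : nat -> D) (F : nat -> Prop) :
  GNS s -> Lucasian s ->
  (forall m : nat, F m -> (0 < m)%N) ->
  (forall m d : nat, F m -> (d %| m)%N -> F d) ->
  (forall a b : nat, (0 < a)%N -> (0 < b)%N -> F (lcmn a b) ->
     forall q : D, is_quot s a b q ->
       congr_mod (s (lcmn a b)) q (s a * s b)) ->
  Green s F.
Proof.
move=> [s0 _ _] sLuc Fpos Fdvd lcm_congr m Fm a b am bm q qE.
have m_gt0 := Fpos m Fm.
have a_gt0 : (0 < a)%N := dvdn_gt0 m_gt0 am.
have b_gt0 : (0 < b)%N := dvdn_gt0 m_gt0 bm.
set l := lcmn a b.
have lm : (l %| m)%N by rewrite dvdn_lcm am bm.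
have l_gt0 : (0 < l)%N by rewrite lcmn_gt0 a_gt0 b_gt0.
have [k ->] := dvdnP lm; rewrite mulnK //.
apply: (@congr_mod_trans _ _ (k%:R * s l)).
  by apply: Lucasian_mul_congr_dvdn; rewrite ?dvdn_lcml ?dvdn_lcmr.
by apply: congr_modMl; apply: lcm_congr => //; apply: Fdvd Fm lm.
Qed.
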